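(* For every odd integer $m\ge 9$ and every odd integer $\Delta\ge m$, there exists an $m$-$\gamma_t$-critical graph $G$ of order $\Delta+m$ with $\Delta(G)=\Delta$ and $\delta(G)\ge 2$.
   Context: All graphs are finite and simple; $\Delta(G)$, $\delta(G)$ are maximum and minimum degree. A set $S\subseteq V(G)$ is a total dominating set if every vertex of $G$ is adjacent to some vertex of $S$; $\gamma_t(G)$ is the minimum size of such a set. A leaf is a vertex of degree one. A graph $G$ with no isolated vertex is $\gamma_t$-critical if for every vertex $v$ not adjacent to a leaf, $\gamma_t(G-v)<\gamma_t(G)$; it is $m$-$\gamma_t$-critical if moreover $\gamma_t(G)=m$. *)

(* A simple graph on a finite type T is a symmetric,
   irreflexive relation e; subgraphs induced on vertex sets V : {set T}. *)
From mathcomp Require Import all_boot.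
Set Implicit Arguments. Unset Strict Implicit. Unset Printing Implicit Defensive.

Definition simple_graph (T : finType) (e : rel T) : Prop :=
  symmetric e /\ irreflexive e.

Definition nbr (T : finType) (e : rel T) (V : {set T}) (x : T) : {set T} :=
  [set y in V | e x y].
Definition deg (T : finType) (e : rel T) (V : {set T}) (x : T) : nat :=
  #|nbr e V x|.

Definition max_deg (T : finType) (e : rel T) (V : {set T}) : nat :=
  \max_(x in V) deg e V x.
Definition min_deg (T : finType) (e : rel T) (V : {set T}) : nat :=
  \big[minn/#|T|]_(x in V) deg e V x.

Definition is_tds (T : finType) (e : rel T) (V S : {set T}) : bool :=
  (S \subset V) && [forall x in V, exists y in S, e x y].

(* total domination number; if no total dominating set exists
   (isolated vertex) the value #|T|.+1 acts as "infinity". *)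
Definition gamma_t (T : finType) (e : rel T) (V : {set T}) : nat :=
  \big[minn/#|T|.+1]_(S : {set T} | is_tds e V S) #|S|.

Definition is_leaf (T : finType) (e : rel T) (V : {set T}) (x : T) : bool :=
  deg e V x == 1.

Definition gt_critical (T : finType) (e : rel T) : Prop :=
  (forall x : T, 0 < deg e setT x) /\
  (forall v : T, ~~ [exists u, e v u && is_leaf e setT u] ->
     gamma_t e [set~ v] < gamma_t e setT).

Definition m_gt_critical (m : nat) (T : finType) (e : rel T) : Prop :=
  gt_critical e /\ gamma_t e setT = m.

(** Write m = 2k + 3 and D = m + 2r.  In the graph defined by [arc] below the hub
    has degree D and every other vertex has degree at most 2r + 8 <= D.

    The 2k + 2 core vertices [Vs b], [Vy i b] have pairwise disjoint
    neighbourhoods: every neighbour of a core vertex p has [partner] p.  Hence a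
    total dominating set S satisfies core \subset partner @: S, so |S| >= 2k + 2,
    and if equality held, [partner] would be a bijection from S onto the core.
    Following which vertices can then dominate the x's, e's and w's forces both
    [Vw 1] and some other [Vw a] into S, and these two have the same partner.
    So gamma_t = 2k + 3 = m, attained by core + [Vw 1].  For every vertex v,
    trading a few core vertices for as many others gives a total dominating set
    of G - v of size 2k + 2. *)

From HB Require Import structures.
From mathcomp Require Import all_boot zify.
Set Implicit Arguments. Unset Strict Implicit. Unset Printing Implicit Defensive.

(* [gamma_t] folds [minn], which has no unit on [nat]; [bigD1] only needs a
   commutative semigroup law. *)
HB.instance Definition _ := SemiGroup.isComLaw.Build nat minn minnA minnC.

Section TotalDomination.

Variables (T : finType) (e : rel T).

Lemma gamma_t_le (V S : {set T}) : is_tds e V S -> gamma_t e V <= #|S|.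
Proof. by move=> tdsS; rewrite /gamma_t (bigD1 S) //= geq_minl. Qed.

Lemma gamma_t_ge (V : {set T}) n :
  n <= #|T|.+1 -> (forall S, is_tds e V S -> n <= #|S|) -> n <= gamma_t e V.
Proof. by move=> nT nS; apply: (big_ind (leq n)) => // a b; rewrite leq_min => ->. Qed.

Lemma tds_dominates (V S : {set T}) x :
  is_tds e V S -> x \in V -> exists2 y, y \in S & e x y.
Proof. by case/andP=> _ /forall_inP domS /domS /exists_inP. Qed.

Lemma tds_by_dominator (f : T -> T) (V S : {set T}) :
  (forall x, e x (f x)) -> S \subset V ->
  (forall x, x \in V -> f x \notin S -> exists2 y, y \in S & e x y) -> is_tds e V S.
Proof.
move=> ef sSV domS; rewrite /is_tds sSV; apply/forall_inP => x xV; apply/exists_inP.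
have [fxS | /(domS x xV)[y yS exy]] := boolP (f x \in S); first by exists (f x).
by exists y.
Qed.

Lemma deg_gt1 (V : {set T}) x a b :
  a != b -> a \in V -> b \in V -> e x a -> e x b -> 1 < deg e V x.
Proof.
move=> ab aV bV xa xb; have <- : #|[set a; b]| = 2 by rewrite cards2 ab.
rewrite /deg subset_leq_card //.
by apply/subsetP => y; rewrite !inE => /orP[]/eqP->; rewrite ?aV ?bV ?xa ?xb.
Qed.

Lemma card_setU_setD (A D P : {set T}) :
  D \subset P -> #|A :|: (P :\: D)| <= #|A| + #|P| - #|D|.
Proof.
move=> sDP; apply: leq_trans (leq_card_setU _ _) _.
by rewrite cardsD (setIidPr sDP); have := subset_leq_card sDP; lia.
Qed.

End TotalDomination.

Lemma negb_eq_self (b : bool) : (~~ b == b) = false. Proof. by case: b. Qed.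
Lemma eq_negb_self (b : bool) : (b == ~~ b) = false. Proof. by case: b. Qed.

Ltac bool_simpl :=
  rewrite ?(negbK, eqxx, eqbF_neg, eqb_id, negb_eq_self, eq_negb_self,
            andbT, andTb, andbF, andFb, orbF, orbT, orbN, orNb) //.

Section Construction.

Variables k r : nat.
Hypothesis k_gt2 : 2 < k.

Inductive vertex :=
  | Hub | Vs of bool | Vw of 'I_3 | Vy of 'I_k & bool | Vx of 'I_k & bool | Ve of 'I_r & bool.

Definition vertex_code (u : vertex) :=
  match u with
  | Hub => inl (inl (inl (inl (inl tt))))
  | Vs b => inl (inl (inl (inl (inr b))))
  | Vw a => inl (inl (inl (inr a)))
  | Vy i b => inl (inl (inr (i, b)))
  | Vx i b => inl (inr (i, b))
  | Ve j b => inr (j, b)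
  end.

Definition vertex_decode (c : unit + bool + 'I_3 + 'I_k * bool + 'I_k * bool + 'I_r * bool) :=
  match c with
  | inl (inl (inl (inl (inl _)))) => Hub
  | inl (inl (inl (inl (inr b)))) => Vs b
  | inl (inl (inl (inr a))) => Vw a
  | inl (inl (inr (i, b))) => Vy i b
  | inl (inr (i, b)) => Vx i b
  | inr (j, b) => Ve j b
  end.

Lemma vertex_codeK : cancel vertex_code vertex_decode. Proof. by case. Qed.

Lemma vertex_decodeK : cancel vertex_decode vertex_code.
Proof. by do 5?case => //; case. Qed.

(* A structural equality, so that comparisons of explicit vertices compute. *)
Definition vertex_eqb (u v : vertex) :=
  match u, v with
  | Hub, Hub => true
  | Vs b, Vs c => b == c
  | Vw a, Vw a' => a == a'
  | Vy i b, Vy j c | Vx i b, Vx j c => (i == j) && (b == c)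
  | Ve i b, Ve j c => (i == j) && (b == c)
  | _, _ => false
  end.

Lemma vertex_eqP : Equality.axiom vertex_eqb.
Proof.
move=> u v; apply: (iffP idP) => [|<-]; last by case: u => //= *; rewrite ?eqxx.
case: u => [|b|a|i b|i b|j b]; case: v => [|c|a'|i' c|i' c|j' c] //=;
  by [move/eqP-> | case/andP=> /eqP-> /eqP->].
Qed.

HB.instance Definition _ := hasDecEq.Build vertex vertex_eqP.
HB.instance Definition _ : hasChoice vertex := CanHasChoice vertex_codeK.
HB.instance Definition _ : isCountable vertex := CanIsCountable vertex_codeK.
HB.instance Definition _ : isFinite vertex := CanIsFinite vertex_codeK.

Lemma vertex_eqE (u v : vertex) : (u == v) = vertex_eqb u v.
Proof. by []. Qed.

Lemma card_vertex : #|{: vertex}| = 4 * k + 2 * r + 6.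
Proof.
rewrite (bij_eq_card (f := vertex_code)); last first.
  by exists vertex_decode; [exact: vertex_codeK | exact: vertex_decodeK].
by rewrite !card_sum !card_prod !card_ord card_unit card_bool; lia.
Qed.

Definition w0 : 'I_3 := @Ordinal 3 0 isT.
Definition w1 : 'I_3 := @Ordinal 3 1 isT.
Definition w2 : 'I_3 := @Ordinal 3 2 isT.

Lemma ord3P (a : 'I_3) : [\/ a = w0, a = w1 | a = w2].
Proof.
by case: a => [[|[|[|//]]] ?]; [constructor 1 | constructor 2 | constructor 3]; apply: val_inj.
Qed.

Definition col (a : 'I_3) : 'I_k := widen_ord k_gt2 a.

Definition arc (u v : vertex) :=
  match u, v with
  | Hub, (Vw _ | Vx _ _ | Ve _ _) => true
  | Vs b, Vs c => b != c
  | Vw a, Vs b => b == (a != 1 :> nat)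
  | Vw a, Vx i _ => a == i :> nat
  | Vw a, Ve _ _ => a == 0 :> nat
  | Vy i b, Vy j c => (i == j) && (b != c)
  | Vy i b, Vx j c => (i == j) && (b == c)
  | Vy i b, Ve _ c => (i == 0 :> nat) && (b == c)
  | Vx i b, Ve _ c => (i == 0 :> nat) && (b != c)
  | Ve j b, Ve l c => (j != l) && (b != c)
  | _, _ => false
  end.

Definition adj (u v : vertex) := arc u v || arc v u.

Lemma adj_sym : symmetric adj. Proof. by move=> u v; rewrite /adj orbC. Qed.

Lemma adj_irr : irreflexive adj.
Proof. by case=> [|b|a|i b|i b|j b]; rewrite /adj /= ?eqxx ?andbF. Qed.

Definition partner (u : vertex) :=
  match u with
  | Hub => Vw w1
  | Vs b => Vs (~~ b)
  | Vw a => Vs (a != 1 :> nat)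
  | Vy i b => Vy i (~~ b)
  | Vx i b => Vy i b
  | Ve _ b => Vy (col w0) b
  end.

Lemma adj_partner u : adj u (partner u).
Proof. by case: u => [|b|a|i b|i b|j b]; rewrite /adj /= ?eqxx ?orbT //; case: b. Qed.

Definition is_core (u : vertex) := if u is (Vs _ | Vy _ _) then true else false.
Definition core := [set u | is_core u].

Lemma partner_private p u : p \in core -> adj p u -> partner u = p.
Proof.
rewrite inE; case: p => [|b|a|i b|i b|j b] //= _;
  case: u => [|c|a'|i' c|i' c|j' c]; rewrite /adj /= ?orbF //.
- by case: b c => [] [].
- by move/eqP->.
- by case/orP=> /andP[/eqP-> bc]; case: b c bc => [] [].
- by case/andP=> /eqP-> /eqP->.
- by case/andP=> /eqP i0 /eqP->; congr Vy; apply: val_inj.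
Qed.

Definition core_vertex (c : bool + 'I_k * bool) :=
  match c with inl b => Vs b | inr (i, b) => Vy i b end.

Lemma core_vertex_inj : injective core_vertex.
Proof. by case=> [b|[i b]] [c|[j c]] //= [] -> // ->. Qed.

Lemma card_core : #|core| = 2 * k + 2.
Proof.
have -> : core = core_vertex @: setT.
  apply/setP=> u; rewrite inE; apply/idP/imsetP => [|[[b|[i b]] _ ->] //].
  by case: u => // [b|i b] _; [exists (inl b) | exists (inr (i, b))].
rewrite card_imset; last exact: core_vertex_inj.
by rewrite cardsT card_sum card_prod card_bool card_ord; lia.
Qed.

Lemma adj_Vx i b u : adj (Vx i b) u ->
  [\/ u = Hub, exists2 a : 'I_3, a = i :> nat & u = Vw a | partner u = Vy i (~~ b)].
Proof.
case: u => [|c|a|j c|j c|l c]; rewrite /adj /=; bool_simpl.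
- by constructor 1.
- by move=> /eqP ai; constructor 2; exists a.
- by case/andP=> /eqP-> /eqP->; constructor 3.
- case/andP=> /eqP i0 bc; constructor 3; congr Vy; first exact: val_inj.
  by case: b c bc => [] [].
Qed.

Lemma adj_Ve j b u : adj (Ve j b) u ->
  [\/ u = Hub, u = Vw w0 | partner u = Vy (col w0) (~~ b)].
Proof.
case: u => [|c|a|i c|i c|l c]; rewrite /adj /=; bool_simpl.
- by constructor 1.
- by move=> /eqP a0; constructor 2; congr Vw; apply: val_inj.
- by case/andP=> /eqP i0 /eqP->; constructor 3; congr Vy; apply: val_inj.
- case/andP=> /eqP i0 cb; constructor 3; congr Vy; first exact: val_inj.
  by case: b c cb => [] [].
- by case/orP=> /andP[_ cb]; constructor 3; congr Vy; case: b c cb => [] [].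
Qed.

Lemma adj_Vw a u : adj (Vw a) u ->
  [\/ u = Hub, u = Vs (a != 1 :> nat), exists2 i : 'I_k, i = a :> nat & exists c, u = Vx i c
     | a = 0 :> nat /\ exists j c, u = Ve j c].
Proof.
case: u => [|c|a'|i c|i c|l c]; rewrite /adj /=; bool_simpl.
- by constructor 1.
- by move=> /eqP->; constructor 2.
- by move=> /eqP ai; constructor 3; exists i => //; exists c.
- by move=> /eqP a0; constructor 4; split => //; exists l, c.
Qed.

Definition is_outer (u : vertex) := if u is (Vs _ | Vw _ | Ve _ _) then true else false.
Definition outer := [set u | is_outer u].

Lemma card_outer : #|outer| <= 2 * r + 5.
Proof.
pose f (c : bool + 'I_3 + 'I_r * bool) :=
  match c with inl (inl b) => Vs b | inl (inr a) => Vw a | inr (j, b) => Ve j b end.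
have : outer \subset f @: setT.
  apply/subsetP => u; rewrite inE; case: u => // [b|a|j b] _; apply/imsetP.
  - by exists (inl (inl b)).
  - by exists (inl (inr a)).
  - by exists (inr (j, b)).
move/subset_leq_card/leq_trans; apply; apply: leq_trans (leq_imset_card _ _) _.
by rewrite cardsT !card_sum card_prod card_bool !card_ord; lia.
Qed.

Lemma nbr_Hub : nbr adj setT Hub = ~: (Hub |: core).
Proof. by apply/setP => u; rewrite !inE; case: u. Qed.

Lemma nbr_nonhub u : u != Hub ->
  exists a b, nbr adj setT u \subset [set Hub; a; b] :|: outer.
Proof.
case: u => [|b|a|i b|i b|j b] // _.
- by exists Hub, Hub; apply/subsetP => v; rewrite !inE; case: v.
- exists (Vx (col a) false), (Vx (col a) true); apply/subsetP => v; rewrite !inE.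
  case: v => [|c|a'|i c|i c|l c]; rewrite /adj /= ?vertex_eqE /=; bool_simpl.
  by move=> ai; rewrite -val_eqE /= eq_sym ai; case: c.
- exists (Vy i (~~ b)), (Vx i b); apply/subsetP => v; rewrite !inE.
  case: v => [|c|a'|j c|j c|l c]; rewrite /adj /= ?vertex_eqE /=; bool_simpl.
    by case/orP=> /andP[/eqP-> bc]; rewrite eqxx; case: b c bc => [] [].
  by case/andP=> /eqP-> /eqP->; rewrite !eqxx.
- exists (Vy i b), Hub; apply/subsetP => v; rewrite !inE.
  by case: v => [|c|a'|j c|j c|l c]; rewrite /adj /= ?vertex_eqE /=; bool_simpl.
- exists (Vy (col w0) b), (Vx (col w0) (~~ b)); apply/subsetP => v; rewrite !inE.
  case: v => [|c|a'|i c|i c|l c]; rewrite /adj /= ?vertex_eqE /=; bool_simpl.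
  by case/andP=> i0 cb; rewrite -val_eqE /= i0; case: b c cb => [] [].
Qed.

Lemma deg_Hub : deg adj setT Hub = 2 * k + 2 * r + 3.
Proof.
have := cardsC (Hub |: core); rewrite /deg nbr_Hub (cardsU1 Hub core).
by rewrite card_core card_vertex inE /=; lia.
Qed.

Lemma deg_le_Hub u : deg adj setT u <= deg adj setT Hub.
Proof.
have [->|/nbr_nonhub[a [b sub]]] := eqVneq u Hub; first by [].
have card3 : #|[set Hub; a; b]| <= 3.
  apply: leq_trans (leq_card_setU _ _) _; rewrite cards1 addn1 ltnS.
  by apply: leq_trans (leq_card_setU _ _) _; rewrite !cards1.
rewrite deg_Hub /deg; apply: leq_trans (subset_leq_card sub) _.
by apply: leq_trans (leq_card_setU _ _) _; have := card_outer; lia.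
Qed.

Lemma vertex_deg_gt1 u : 1 < deg adj setT u.
Proof.
have nbrs v a b : a != b -> adj v a -> adj v b -> 1 < deg adj setT v.
  by move=> ab; apply: deg_gt1; rewrite ?inE.
case: u => [|b|a|i b|i b|j b].
- by apply: (nbrs _ (Vw w0) (Vw w1)).
- by apply: (nbrs _ (Vs (~~ b)) (Vw (if b then w0 else w1))); case: b.
- by apply: (nbrs _ Hub (Vs (a != 1 :> nat))); rewrite /adj /= ?eqxx ?orbT.
- by apply: (nbrs _ (Vy i (~~ b)) (Vx i b)); rewrite /adj /= ?eqxx ?orbT //; case: b.
- by apply: (nbrs _ Hub (Vy i b)); rewrite /adj /= ?eqxx ?orbT.
- by apply: (nbrs _ Hub (Vy (col w0) b)); rewrite /adj /= ?eqxx ?orbT.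
Qed.

(* Locked: unlocked, matching the membership lemmas against it unfolds the
   underlying finset and takes forever. *)
Fact exchange_key : unit. Proof. by []. Qed.
Definition exchange (out add : seq vertex) : {set vertex} :=
  locked_with exchange_key ([set:: add] :|: (core :\: [set:: out])).

Lemma in_exchange out add u :
  (u \in exchange out add) = (u \in add) || (u \notin out) && is_core u.
Proof. by rewrite [exchange _ _]unlock !inE. Qed.

Lemma card_exchange out add : uniq out -> all is_core out ->
  #|exchange out add| <= size add + (2 * k + 2) - size out.
Proof.
move=> uout cout; rewrite [exchange _ _]unlock.
have out_core : [set:: out] \subset core.
  by apply/subsetP => u; rewrite inE => /(allP cout); rewrite inE.
apply: leq_trans (card_setU_setD _ out_core) _.
by rewrite card_core !cardsE (card_uniqP uout) leq_sub2r // leq_add2r card_size.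
Qed.

Ltac vertex_simpl := rewrite /= ?in_exchange ?in_cons ?in_nil ?vertex_eqE /=; bool_simpl.
Ltac dominate_by y := exists y; [vertex_simpl | rewrite /adj /=; bool_simpl].

Lemma exchange_tds v out add :
  v \notin exchange out add ->
  (forall u, u != v -> partner u \notin exchange out add ->
     exists2 y, y \in exchange out add & adj u y) ->
  is_tds adj [set~ v] (exchange out add).
Proof.
move=> vS domS; apply: (tds_by_dominator adj_partner).
  by rewrite subsetC sub1set inE.
by move=> u; rewrite in_setC1; apply: domS.
Qed.

Lemma Hub_critical : is_tds adj [set~ Hub] (exchange [::] [::]).
Proof.
apply: exchange_tds => [|u]; first by vertex_simpl.
by case: u => //= [c|a|i c|i c|j c] _; vertex_simpl.
Qed.

Lemma Vx_critical i b : is_tds adj [set~ Vx i b] (exchange [:: Vy i b] [:: Vx i (~~ b)]).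
Proof.
apply: exchange_tds => [|u]; first by vertex_simpl; case: b.
case: u => [|c|a|j c|j c|l c] //=; vertex_simpl.
- by move=> _ _; dominate_by (Vx i (~~ b)).
- by move=> _ /andP[/eqP-> /eqP<-]; dominate_by (Vx i c).
- by move=> /negbTE->.
- by move=> _ /andP[/eqP<- /eqP<-]; dominate_by (Vx (col w0) (~~ c)).
Qed.

Lemma Ve_critical j b :
  is_tds adj [set~ Ve j b] (exchange [:: Vy (col w0) b] [:: Ve j (~~ b)]).
Proof.
apply: exchange_tds => [|u]; first by vertex_simpl.
case: u => [|c|a|i c|i c|l c] //=; vertex_simpl.
- by move=> _ _; dominate_by (Ve j (~~ b)).
- by move=> _ /andP[/eqP-> /eqP<-]; dominate_by (Ve j c).
- by move=> _ /andP[/eqP-> /eqP->]; dominate_by (Ve j (~~ b)).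
- move=> lj /eqP cb; subst c; rewrite eqxx andbT in lj.
  by dominate_by (Ve j (~~ b)); rewrite lj.
Qed.

Lemma Vy_critical i b :
  is_tds adj [set~ Vy i b] (exchange [:: Vy i false; Vy i true] [:: Hub; Vx i (~~ b)]).
Proof.
apply: exchange_tds => [|u]; first by vertex_simpl.
case: u => [|c|a|j c|j c|l c] //=; vertex_simpl.
- by move=> _ _; dominate_by (Vx i (~~ b)).
- move=> + /orP[]/andP[/eqP ji _]; subst j; rewrite eqxx /= => cb;
    by dominate_by (Vx i c); case: b c cb => [] [].
- by move=> _ /orP[]/andP[/eqP-> _]; dominate_by Hub.
- by move=> _ _; dominate_by Hub.
Qed.

Lemma Vs_critical b a : adj (Vs (~~ b)) (Vw a) ->
  is_tds adj [set~ Vs b] (exchange [:: Vs false; Vs true] [:: Hub; Vw a]).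
Proof.
move=> adj_a; apply: exchange_tds => [|u]; first by vertex_simpl.
case: u => [|c|a'|j c|j c|l c] //=; vertex_simpl.
- by move=> _ _; dominate_by (Vw a).
- move=> cb _; have -> : c = ~~ b by case: b c cb adj_a => [] [].
  by exists (Vw a); first vertex_simpl.
- by move=> _ _; dominate_by Hub.
Qed.

Lemma Vw1_critical : is_tds adj [set~ Vw w1] (exchange [:: Vs false] [:: Vw w0]).
Proof.
apply: exchange_tds => [|u]; first by vertex_simpl.
case: u => [|c|a|j c|j c|l c] //=; vertex_simpl.
- by move=> _ _; dominate_by (Vw w0).
- by case: c => // _ _; dominate_by (Vw w0).
- by case: (ord3P a) => ->.
Qed.

Lemma Vw0_critical :
  is_tds adj [set~ Vw w0] (exchange [:: Vs false; Vs true; Vy (col w1) false; Vy (col w2) false]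
                                    [:: Vw w1; Vw w2; Vx (col w1) true; Vx (col w2) true]).
Proof.
apply: exchange_tds => [|u]; first by vertex_simpl.
case: u => [|c|a|j c|j c|l c] //=; vertex_simpl.
- by case: c => _ _; [dominate_by (Vw w2) | dominate_by (Vw w1)].
- by case: (ord3P a) => -> // _ _;
    [dominate_by (Vx (col w1) true) | dominate_by (Vx (col w2) true)].
- by move=> _ /orP[]/andP[/eqP-> ->];
    [dominate_by (Vx (col w1) true) | dominate_by (Vx (col w2) true)].
- by move=> _ /orP[]/andP[/eqP-> _]; [dominate_by (Vw w1) | dominate_by (Vw w2)].
Qed.

Lemma Vw2_critical :
  is_tds adj [set~ Vw w2] (exchange [:: Vs false; Vs true; Vy (col w0) false; Vy (col w1) false]
                                    [:: Vw w0; Vw w1; Vx (col w0) true; Vx (col w1) true]).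
Proof.
apply: exchange_tds => [|u]; first by vertex_simpl.
case: u => [|c|a|j c|j c|l c] //=; vertex_simpl.
- by case: c => _ _; [dominate_by (Vw w0) | dominate_by (Vw w1)].
- by case: (ord3P a) => -> // _ _;
    [dominate_by (Vx (col w0) true) | dominate_by (Vx (col w1) true)].
- by move=> _ /orP[]/andP[/eqP-> ->];
    [dominate_by (Vx (col w0) true) | dominate_by (Vx (col w1) true)].
- by move=> _ /orP[]/andP[/eqP-> _]; [dominate_by (Vw w0) | dominate_by (Vw w1)].
- by move=> _ _; dominate_by (Vw w0).
Qed.

Section LowerBound.

Variable S : {set vertex}.
Hypotheses (tdsS : is_tds adj setT S) (small : #|S| <= 2 * k + 2).

Let dominated u : exists2 y, y \in S & adj u y := tds_dominates tdsS (in_setT u).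

Lemma core_sub_partner_image : core \subset partner @: S.
Proof.
apply/subsetP => p pcore; have [y yS py] := dominated p.
by rewrite -(partner_private pcore py); apply: imset_f.
Qed.

Lemma partner_inj : {in S &, injective partner}.
Proof.
apply/imset_injP; rewrite eqn_leq leq_imset_card /=.
by apply: leq_trans small _; rewrite -card_core subset_leq_card // core_sub_partner_image.
Qed.

Lemma partner_in_core s : s \in S -> partner s \in core.
Proof.
have /eqP -> : core == partner @: S.
  by rewrite eqEcard core_sub_partner_image card_core (leq_trans (leq_imset_card _ _) small).
exact: imset_f.
Qed.

Lemma Hub_notin : Hub \notin S.
Proof. by apply/negP => /partner_in_core; rewrite inE. Qed.

Lemma Vx_in_S i b : Vx i b \in S -> exists2 a : 'I_3, a = i :> nat & Vw a \in S.
Proof.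
move=> xS; have [y yS adj_y] := dominated (Vx i (~~ b)).
case/adj_Vx: (adj_y) => [yH | [a ai ya] | py].
- by rewrite yH (negbTE Hub_notin) in yS.
- by exists a; rewrite // -ya.
- have yx : y = Vx i b by apply: partner_inj; rewrite //= py negbK.
  by move: adj_y; rewrite yx.
Qed.

Lemma Ve_in_S j b : Ve j b \in S -> Vw w0 \in S.
Proof.
move=> eS; have [y yS adj_y] := dominated (Ve j (~~ b)).
case/adj_Ve: (adj_y) => [yH | <- // | py].
- by rewrite yH (negbTE Hub_notin) in yS.
- have ye : y = Ve j b by apply: partner_inj; rewrite //= py negbK.
  by move: adj_y; rewrite ye /adj /= eqxx.
Qed.

Lemma Vw_in_S (a : 'I_3) : Vs (a != 1 :> nat) \notin S -> Vw a \in S.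
Proof.
move=> sS; have [y yS] := dominated (Vw a).
case/adj_Vw => [yH | ys | [i ia [c yx]] | [a0 [j [c ye]]]].
- by rewrite yH (negbTE Hub_notin) in yS.
- by rewrite ys (negbTE sS) in yS.
- have [a' a'i a'S] : exists2 a' : 'I_3, a' = i :> nat & Vw a' \in S.
    by apply: (@Vx_in_S i c); rewrite -yx.
  by have -> : a = a' by apply: val_inj; rewrite /= a'i ia.
- have -> : a = w0 by apply: val_inj.
  by apply: (@Ve_in_S j c); rewrite -ye.
Qed.

Lemma some_Vw_in_S : exists a, Vw a \in S.
Proof.
have [y yS] := dominated Hub; case: y yS => [|c|a|i b|i b|j b] yS; rewrite /adj //= => _.
- by exists a.
- by have [a _ aS] := Vx_in_S yS; exists a.
- by exists w0; apply: Ve_in_S yS.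
Qed.

Lemma Vw1_notin : Vw w1 \notin S.
Proof.
apply/negP => w1S.
have tS : Vs true \notin S by apply/negP => tS; have := partner_inj tS w1S erefl.
have w0S : Vw w0 \in S by apply: Vw_in_S.
have w2S : Vw w2 \in S by apply: Vw_in_S.
by case: (partner_inj w0S w2S erefl) => /eqP.
Qed.

Lemma no_small_tds : False.
Proof.
have [a aS] := some_Vw_in_S.
have a1 : a != 1 :> nat.
  by apply: contraNneq Vw1_notin => a1; have -> : w1 = a by apply: val_inj.
have fS : Vs false \notin S.
  by apply/negP => fS; have := partner_inj fS aS; rewrite /= a1 => /(_ erefl).
by have := @Vw_in_S w1 fS; rewrite (negbTE Vw1_notin).
Qed.

End LowerBound.

Lemma tds_card_ge S : is_tds adj setT S -> 2 * k + 3 <= #|S|.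
Proof.
move=> tdsS; case: leqP => // small.
by case: (no_small_tds tdsS); rewrite -ltnS -addnS.
Qed.

Lemma tds_core_w1 : is_tds adj setT (exchange [::] [:: Vw w1]).
Proof.
apply: (tds_by_dominator adj_partner) => [|u _]; first exact: subsetT.
by case: u => [|c|a|i c|i c|j c]; vertex_simpl.
Qed.

Lemma gamma_t_setT : gamma_t adj setT = 2 * k + 3.
Proof.
apply/eqP; rewrite eqn_leq; apply/andP; split.
  apply: leq_trans (gamma_t_le tds_core_w1) _.
  by apply: leq_trans (card_exchange [:: Vw w1] _ _) _ => //=; lia.
apply: gamma_t_ge => [|S]; last exact: tds_card_ge.
by rewrite card_vertex; lia.
Qed.

Lemma gamma_t_setC1 v : gamma_t adj [set~ v] <= 2 * k + 2.
Proof.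
have swap out add : is_tds adj [set~ v] (exchange out add) -> uniq out ->
    all is_core out -> size add = size out -> gamma_t adj [set~ v] <= 2 * k + 2.
  move=> tdsS uout cout sz; apply: leq_trans (gamma_t_le tdsS) _.
  by apply: leq_trans (card_exchange add uout cout) _; rewrite sz addKn.
case: v swap => [|b|a|i b|i b|j b] swap.
- exact: (swap _ _ Hub_critical).
- case: b swap => swap.
    by apply: (swap _ _ (@Vs_critical true w1 _)); vertex_simpl.
  by apply: (swap _ _ (@Vs_critical false w0 _)); vertex_simpl.
- case: (ord3P a) swap => -> swap.
  + by apply: (swap _ _ Vw0_critical); vertex_simpl.
  + exact: (swap _ _ Vw1_critical).
  + by apply: (swap _ _ Vw2_critical); vertex_simpl.
- by apply: (swap _ _ (Vy_critical i b)); vertex_simpl.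
- exact: (swap _ _ (Vx_critical i b)).
- exact: (swap _ _ (Ve_critical j b)).
Qed.

Lemma max_deg_setT : max_deg adj setT = 2 * k + 2 * r + 3.
Proof.
apply/eqP; rewrite eqn_leq -deg_Hub; apply/andP; split.
  by apply/bigmax_leqP => u _; apply: deg_le_Hub.
by apply: leq_bigmax_cond; rewrite inE.
Qed.

Lemma min_deg_setT : 2 <= min_deg adj setT.
Proof.
apply: (big_ind (leq 2)) => [|a b ha hb|u _]; last exact: vertex_deg_gt1.
  by rewrite card_vertex; lia.
by rewrite leq_min ha hb.
Qed.

End Construction.

Theorem mainTheorem8 (m D : nat) :
  odd m -> 9 <= m -> odd D -> m <= D ->
  exists (T : finType) (e : rel T),
    [/\ simple_graph e, m_gt_critical m e, #|T| = D + m,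
        max_deg e setT = D & 2 <= min_deg e setT].
Proof.
move=> odd_m m_ge9 odd_D m_le_D.
have [k m_eq] : exists k, m = 2 * k + 3 by exists (m./2 - 1); lia.
have [r D_eq] : exists r, D = 2 * r + m by exists ((D - m)./2); lia.
have k_gt2 : 2 < k by lia.
have gamma_m : gamma_t (@adj k r) setT = m by rewrite gamma_t_setT.
exists (vertex k r), (@adj k r); split.
- by split; [apply: adj_sym | apply: adj_irr].
- split=> //; split=> [u|v _]; first exact: leq_trans (vertex_deg_gt1 k_gt2 u).
  by rewrite gamma_m; apply: leq_ltn_trans (gamma_t_setC1 k_gt2 v) _; lia.
- by rewrite card_vertex; lia.
- by rewrite max_deg_setT; lia.
- exact: min_deg_setT.
Qed.
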